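(* Let $G$ be a torsion-free group and $G'\le G$ a subgroup of finite index. Suppose $G$ acts on a simplicial tree $T$ and the induced action of $G'$ on $T$ is $\kappa$-acylindrical. Then the action of $G$ on $T$ is $\kappa$-acylindrical.
   Context: For a non-negative integer $\kappa$, an action of a group on a simplicial tree is $\kappa$-acylindrical if the pointwise stabiliser of every edge path of length at least $\kappa+1$ (number of edges) is trivial. *)

From HB Require Import structures.
From mathcomp Require Import all_boot monoid.
Set Implicit Arguments. Unset Strict Implicit. Unset Printing Implicit Defensive.

Local Open Scope group_scope.

Definition torsion_free (G : groupType) : Prop :=
  forall (g : G) (n : nat), (0 < n)%N -> g ^+ n = 1 -> g = 1.

Definition is_subgroup (G : groupType) (H : G -> Prop) : Prop :=
  [/\ H 1, (forall x y, H x -> H y -> H (x * y)) & (forall x, H x -> H x^-1)].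

Definition finite_index (G : groupType) (H : G -> Prop) : Prop :=
  exists s : seq G, forall g : G, exists2 r, r \in s & H (r^-1 * g).

Fixpoint is_walk (V : Type) (adj : V -> V -> Prop) (s : seq V) : Prop :=
  match s with
  | a :: ((b :: _) as t) => adj a b /\ is_walk adj t
  | _ => True
  end.

Fixpoint reduced (V : Type) (s : seq V) : Prop :=
  match s with
  | a :: ((_ :: c :: _) as t) => a <> c /\ reduced t
  | _ => True
  end.

Definition is_tree (V : Type) (adj : V -> V -> Prop) : Prop :=
  [/\ (forall x y, adj x y -> adj y x),
      (forall x, ~ adj x x),
      (forall x y, exists s : seq V, is_walk adj (x :: s) /\ last x s = y) &
      (forall x (s : seq V), is_walk adj (x :: s) -> reduced (x :: s) ->
          s <> [::] -> last x s <> x)].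

(* An edge path of length n (n edges) in the tree: a reduced walk
   v0 :: s with size s = n (n+1 vertices). *)
Definition edge_path (V : Type) (adj : V -> V -> Prop) (v0 : V) (s : seq V)
  : Prop := is_walk adj (v0 :: s) /\ reduced (v0 :: s).

Definition tree_action (G : groupType) (V : Type) (adj : V -> V -> Prop)
  (act : G -> V -> V) : Prop :=
  [/\ (forall v, act 1 v = v),
      (forall g h v, act (g * h) v = act g (act h v)) &
      (forall g u v, adj u v -> adj (act g u) (act g v))].

Fixpoint fixes_all (G : groupType) (V : Type) (act : G -> V -> V) (g : G)
  (s : seq V) : Prop :=
  match s with
  | [::] => True
  | v :: t => act g v = v /\ fixes_all act g t
  end.

Definition acylindrical_on (G : groupType) (H : G -> Prop) (V : Type)
  (adj : V -> V -> Prop) (act : G -> V -> V) (kappa : nat) : Prop :=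
  forall (v0 : V) (s : seq V), edge_path adj v0 s -> (kappa.+1 <= size s)%N ->
    forall g : G, H g -> fixes_all act g (v0 :: s) -> g = 1.

Definition acylindrical (G : groupType) (V : Type) (adj : V -> V -> Prop)
  (act : G -> V -> V) (kappa : nat) : Prop :=
  acylindrical_on (fun _ : G => True) adj act kappa.

(* If g fixes an edge path, so do all its powers. Among g^0, ..., g^m, where m
   is the number of cosets in a covering of G by left cosets of G', two lie in
   the same coset, so some positive power g^n lies in G'; acylindricity of the
   G'-action gives g^n = 1, and torsion-freeness gives g = 1. *)
From HB Require Import structures.
From mathcomp Require Import all_boot monoid.
From Stdlib Require Import ClassicalEpsilon.

Set Implicit Arguments.
Unset Strict Implicit.
Unset Printing Implicit Defensive.

Local Open Scope group_scope.

Lemma pigeonhole_seq (T : eqType) (s : seq T) (f : nat -> T) :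
  (forall k, f k \in s) -> exists i j, [/\ i < j, j <= size s & f i = f j]%N.
Proof.
move=> fs; pose L := map f (iota 0 (size s).+1).
have /(uniqPn (f 0%N))[i [j [ij jL]]] : ~~ uniq L.
  apply/negP => uniq_L.
  suff : (size L <= size s)%N by rewrite size_map size_iota ltnn.
  by apply: uniq_leq_size => // _ /mapP[k _ ->].
rewrite size_map size_iota in jL.
rewrite !(nth_map 0%N) ?size_iota ?nth_iota ?(ltn_trans ij) //.
by exists i, j.
Qed.

Section FiniteIndex.

Variables (G : groupType) (H : G -> Prop).
Hypothesis H_subgroup : is_subgroup H.

Lemma subgroup_same_lcoset (r x y : G) :
  H (r^-1 * x) -> H (r^-1 * y) -> H (x^-1 * y).
Proof.
case: H_subgroup => _ HM HV Hx Hy.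
by have := HM _ _ (HV _ Hx) Hy; rewrite invgM invgK -mulgA mulVKg.
Qed.

Lemma finite_index_expg_mem (g : G) :
  finite_index H -> exists2 n, (0 < n)%N & H (g ^+ n).
Proof.
case=> s cover.
have /all_sig[rep repP] : forall k, {r | r \in s /\ H (r^-1 * g ^+ k)}.
  move=> k; apply: constructive_indefinite_description.
  by have [r] := cover (g ^+ k); exists r.
have [i [j [ij _ rep_ij]]] := pigeonhole_seq (fun k => (repP k).1).
exists (j - i)%N; first by rewrite subn_gt0.
have [_ Hi] := repP i; have [_ Hj] := repP j; rewrite -rep_ij in Hj.
have := subgroup_same_lcoset Hi Hj.
by rewrite -(subnKC (ltnW ij)) expgnDr mulKg addKn.
Qed.

End FiniteIndex.

Lemma fixes_all_expg (G : groupType) (V : Type) (act : G -> V -> V)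
    (g : G) (s : seq V) (n : nat) :
  (forall v, act 1 v = v) -> (forall g h v, act (g * h) v = act g (act h v)) ->
  fixes_all act g s -> fixes_all act (g ^+ n) s.
Proof.
move=> act1 actM; elim: s => [//|v s IHs] /= [gv gs]; split; last exact: IHs.
by elim: n {IHs} => [|n IHn]; rewrite ?expg0 ?act1 // expgS actM IHn.
Qed.

Theorem lemma2p5 (G : groupType) (G' : G -> Prop) (V : Type)
  (adj : V -> V -> Prop) (act : G -> V -> V) (kappa : nat) :
  torsion_free G ->
  is_subgroup G' -> finite_index G' ->
  is_tree adj -> tree_action adj act ->
  acylindrical_on G' adj act kappa ->
  acylindrical adj act kappa.
Proof.
move=> torsion_free_G G'_subgroup G'_finite _ [act1 actM _] acyl_G'.
move=> v0 s path_s size_s g _ g_fixes.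
have [n n_gt0 gn_in_G'] := finite_index_expg_mem G'_subgroup g G'_finite.
apply: (torsion_free_G g n n_gt0).
exact: acyl_G' path_s size_s _ gn_in_G' (fixes_all_expg n act1 actM g_fixes).
Qed.
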